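(* Let $R$ be a ring, $*\in\{l,\emptyset\}$, $S\in\mathbb{L}_*(R,\mathfrak{a})$, $\overline{R}=R/\mathfrak{a}$ and $\overline{S}=(S+\mathfrak{a})/\mathfrak{a}$. The functor $S^{-1}:R\text{-mod}\to S^{-1}R\text{-mod}$, $M\mapsto S^{-1}M$, is exact if and only if for all left $R$-modules $M_1\subseteq M_2$ the $\overline{R}$-module $(M_1\cap\mathfrak{a}M_2)/\mathfrak{a}M_1$ is $\overline{S}$-torsion.
   Context: Rings are associative with $1$. Multiplicative set: $SS\subseteq S$, $1\in S$, $0\notin S$. $R\langle S^{-1}\rangle=R\langle X_S\rangle/I_S$ ($R\langle X_S\rangle$ freely generated by $R$ and noncommuting $x_s$, $s\in S$; $I_S$ generated by $sx_s-1,x_ss-1$); $\mathrm{ass}_R(S)=\ker(R\to R\langle S^{-1}\rangle)$. $S$ is left localizable if $R\langle S^{-1}\rangle\ne0$ and every element has the form $(x_s+I_S)(r+I_S)$; localizable if moreover every element also has the form $(r+I_S)(x_s+I_S)$. $\mathbb{L}_l(R,\mathfrak{a})$ (resp. $\mathbb{L}_\emptyset(R,\mathfrak{a})$) is the set of left localizable (resp. localizable) sets $S$ with $\mathrm{ass}_R(S)=\mathfrak{a}$. $S^{-1}R:=R\langle S^{-1}\rangle$; for a left $R$-module $M$, $S^{-1}M:=S^{-1}R\otimes_RM$. Here $\overline{S}$ is a left denominator set of $\overline{R}$ consisting of regular elements and $S^{-1}R\simeq\overline{S}^{-1}\overline{R}$; an $\overline{R}$-module $N$ is $\overline{S}$-torsion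 if $\overline{S}^{-1}\overline{R}\otimes_{\overline{R}}N=0$. *)

From HB Require Import structures.
From mathcomp Require Import all_boot all_order all_algebra.
Set Implicit Arguments. Unset Strict Implicit. Unset Printing Implicit Defensive.
Import GRing.Theory.
Local Open Scope ring_scope.

Definition mult_set (R : pzRingType) (S : R -> Prop) : Prop :=
  [/\ S 1, ~ S 0 & forall s t, S s -> S t -> S (s * t)].

Definition inverts (R B : pzRingType) (S : R -> Prop) (psi : R -> B) : Prop :=
  forall s, S s -> exists y : B, psi s * y = 1 /\ y * psi s = 1.

(* (A, phi) is the universal localization R<S^{-1}> = R<X_S>/I_S,
   characterized by its universal property. *)
Definition univ_loc (R A : pzRingType) (S : R -> Prop) (phi : {rmorphism R -> A}) : Prop :=
  inverts S phi /\
  forall (B : pzRingType) (psi : {rmorphism R -> B}), inverts S psi ->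
    exists h : {rmorphism A -> B},
      (forall r, h (phi r) = psi r) /\
      forall h' : {rmorphism A -> B}, (forall r, h' (phi r) = psi r) -> forall a, h' a = h a.

Inductive loc_kind := LeftLoc | TwoSidedLoc .

(* S is left localizable (k = LeftLoc) / localizable (k = TwoSidedLoc):
   R<S^{-1}> <> 0, every element is x_s r, and (two-sided case) also r x_s. *)
Definition localizable (R A : pzRingType) (k : loc_kind) (S : R -> Prop) (phi : R -> A) : Prop :=
  [/\ (1 : A) <> 0,
      (forall a : A, exists s r (x : A),
          [/\ S s, x * phi s = 1, phi s * x = 1 & a = x * phi r]) &
      (k = TwoSidedLoc -> forall a : A, exists s r (x : A),
          [/\ S s, x * phi s = 1, phi s * x = 1 & a = phi r * x])].

Definition ass (R A : pzRingType) (phi : R -> A) : R -> Prop := fun r => phi r = 0.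

Definition img_set (R Rb : pzRingType) (pi : R -> Rb) (S : R -> Prop) : Rb -> Prop :=
  fun y => exists s, S s /\ pi s = y.

Definition semilin_on (R K : pzRingType) (phi : R -> K) (M : lmodType R) (X : lmodType K)
  (P : M -> Prop) (f : M -> X) : Prop :=
  (forall x y, P x -> P y -> f (x + y) = f x + f y) /\
  (forall r x, P x -> f (r *: x) = phi r *: f x).

Definition klin (K : pzRingType) (T X : lmodType K) (g : T -> X) : Prop :=
  (forall x y, g (x + y) = g x + g y) /\ (forall a x, g (a *: x) = a *: g x).

Definition submod (R : pzRingType) (M : lmodType R) (P : M -> Prop) : Prop :=
  [/\ P 0, (forall x y, P x -> P y -> P (x + y)) & (forall r x, P x -> P (r *: x))].

Definition ideal_mul (R : pzRingType) (M : lmodType R) (I : R -> Prop) (P : M -> Prop) : M -> Prop :=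
  fun x => exists s : seq (R * M),
    (forall p, p \in s -> I p.1 /\ P p.2) /\ x = \sum_(p <- s) p.1 *: p.2.

(* (T, iota) is the tensor product K (x)_R (P/Q), with K viewed as a right
   R-module via phi and P, Q (Q subset P) submodules of M: universal property
   of extension of scalars applied to the quotient module P/Q. *)
Definition is_tensor_quot (R K : pzRingType) (phi : R -> K) (M : lmodType R)
  (P Q : M -> Prop) (T : lmodType K) (iota : M -> T) : Prop :=
  [/\ semilin_on phi P iota,
      (forall x, Q x -> iota x = 0) &
      forall (X : lmodType K) (f : M -> X),
        semilin_on phi P f -> (forall x, Q x -> f x = 0) ->
        exists g : T -> X,
          [/\ klin g, (forall x, P x -> g (iota x) = f x) &
              forall g' : T -> X, klin g' -> (forall x, P x -> g' (iota x) = f x) ->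
                forall t, g' t = g t]].

(* (T, iota) is S^{-1}M := S^{-1}R (x)_R M *)
Definition is_tensor (R K : pzRingType) (phi : R -> K) (M : lmodType R)
  (T : lmodType K) (iota : M -> T) : Prop :=
  is_tensor_quot phi (fun _ : M => True) (fun x => x = 0) iota.

Definition loc_functor_exact (R A : pzRingType) (phi : R -> A) : Prop :=
  forall (M1 M2 M3 : lmodType R) (f : M1 -> M2) (g : M2 -> M3),
    semilin_on id (fun _ => True) f -> semilin_on id (fun _ => True) g ->
    (forall y, g y = 0 <-> exists x, f x = y) ->
    forall (T1 T2 T3 : lmodType A) (i1 : M1 -> T1) (i2 : M2 -> T2) (i3 : M3 -> T3),
      is_tensor phi i1 -> is_tensor phi i2 -> is_tensor phi i3 ->
      forall (F : T1 -> T2) (G : T2 -> T3), klin F -> klin G ->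
        (forall m, F (i1 m) = i2 (f m)) -> (forall m, G (i2 m) = i3 (g m)) ->
        forall t, G t = 0 <-> exists u, F u = t.

(* The module P/Q (an Rb-module via pi : R -> Rb, Q killing ker pi) is
   Sbar-torsion: Sbar^{-1}Rb (x)_Rb (P/Q) = 0, where (B, psi) = Sbar^{-1}Rb. *)
Definition torsion_quot (R Rb B : pzRingType) (pi : R -> Rb) (psi : Rb -> B)
  (M : lmodType R) (P Q : M -> Prop) : Prop :=
  forall (T : lmodType B) (iota : M -> T),
    is_tensor_quot (fun r => psi (pi r)) P Q iota -> forall t : T, t = 0.

(* Every element of A = S^{-1}R has the form phi(s)^{-1} phi(r).  Hence for a left
   R-module N and a submodule Q, the module A ⊗_R N/Q is realised by pairs (a, n),
   read as a ⊗ n, and 1 ⊗ n vanishes iff t n ∈ Q + 𝔞N for some t ∈ S, where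
   𝔞 = ker phi.  For M1 ⊆ M2, an element x of M1 ∩ 𝔞M2 dies in S^{-1}M2, so if
   S^{-1}M1 -> S^{-1}M2 is injective then t x ∈ 𝔞M1 for some t ∈ S.  Conversely this
   elementwise condition, applied to the image of M2 -> M3, gives exactness in the
   middle of S^{-1}M1 -> S^{-1}M2 -> S^{-1}M3.  Finally B = Sbar^{-1}(R/𝔞) is A
   again, because R/𝔞 embeds into A, so the same description of fractions over B
   turns the elementwise condition into (M1 ∩ 𝔞M2)/𝔞M1 being Sbar-torsion. *)

From HB Require Import structures.
From mathcomp Require Import all_boot all_order all_algebra.
From mathcomp Require Import boolp.
Set Implicit Arguments. Unset Strict Implicit. Unset Printing Implicit Defensive.
Import GRing.Theory.
Local Open Scope ring_scope.
Local Open Scope quotient_scope.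

(** * Submodules, ideal products and semilinear maps *)

Lemma subrACA (V : zmodType) (a b c d : V) : a - b - (c - d) = a - c - (b - d).
Proof. by rewrite opprD addrACA -opprD. Qed.

Lemma inverts_scalerI (R K : pzRingType) (S : R -> Prop) (phi : R -> K) (X : lmodType K)
  s (x y : X) : inverts S phi -> S s -> phi s *: x = phi s *: y -> x = y.
Proof.
move=> phi_inv Ss e; have [z [_ zV]] := phi_inv s Ss.
by rewrite -[x]scale1r -[y]scale1r -zV -!scalerA e.
Qed.

Section Submodules.
Variables (R : pzRingType) (M : lmodType R).

Section Closure.
Variables (U : M -> Prop) (Usub : submod U).

Lemma submod0 : U 0. Proof. by case: Usub. Qed.

Lemma submodD x y : U x -> U y -> U (x + y).
Proof. by case: Usub => _ UD _; apply: UD. Qed.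

Lemma submodZ r x : U x -> U (r *: x).
Proof. by case: Usub => _ _ UZ; apply: UZ. Qed.

Lemma submodN x : U x -> U (- x).
Proof. by rewrite -scaleN1r; apply: submodZ. Qed.

Lemma submodB x y : U x -> U y -> U (x - y).
Proof. by move=> Ux Uy; apply: submodD Ux (submodN Uy). Qed.

End Closure.

Lemma submodT : submod (fun _ : M => True). Proof. by []. Qed.

Lemma submod_eq0 : submod (fun x : M => x = 0).
Proof. by split=> // [x y -> ->|r x ->]; rewrite ?addr0 ?scaler0. Qed.

Lemma submodI (U V : M -> Prop) :
  submod U -> submod V -> submod (fun x => U x /\ V x).
Proof.
move=> Usub Vsub; split; first by split; apply: submod0.
- by move=> x y [Ux Vx] [Uy Vy]; split; apply: submodD.
- by move=> r x [Ux Vx]; split; apply: submodZ.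
Qed.

End Submodules.

Section IdealMul.
Variables (R : pzRingType) (M : lmodType R) (I : R -> Prop) (P : M -> Prop).

Lemma ideal_mul_ind (Z : M -> Prop) :
  Z 0 -> (forall x y, Z x -> Z y -> Z (x + y)) ->
  (forall a p, I a -> P p -> Z (a *: p)) ->
  forall x, ideal_mul I P x -> Z x.
Proof.
move=> Z0 ZD Zgen x [s [sIP ->]].
elim: s sIP => [|p s IHs] sIP; first by rewrite big_nil.
rewrite big_cons; apply: ZD.
  by have [Ip Pp] := sIP p (mem_head _ _); apply: Zgen.
by apply: IHs => q sq; apply: sIP; rewrite inE sq orbT.
Qed.

Lemma ideal_mul0 : ideal_mul I P 0.
Proof. by exists [::]; rewrite big_nil. Qed.

Lemma ideal_mulD x y : ideal_mul I P x -> ideal_mul I P y -> ideal_mul I P (x + y).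
Proof.
move=> [s [sIP ->]] [t [tIP ->]]; exists (s ++ t); split; last by rewrite big_cat.
by move=> p; rewrite mem_cat => /orP[]; [apply: sIP | apply: tIP].
Qed.

Lemma ideal_mul_gen a p : I a -> P p -> ideal_mul I P (a *: p).
Proof.
by move=> Ia Pp; exists [:: (a, p)]; rewrite big_seq1; split=> // q; rewrite inE => /eqP ->.
Qed.

Lemma ideal_mul_sub : submod P -> forall x, ideal_mul I P x -> P x.
Proof.
move=> Psub; apply: ideal_mul_ind; first exact: submod0.
  by move=> x y; apply: submodD.
by move=> a p _; apply: submodZ.
Qed.

Hypothesis I_lideal : forall r a, I a -> I (r * a).

Lemma ideal_mulZ r x : ideal_mul I P x -> ideal_mul I P (r *: x).
Proof.
apply: (ideal_mul_ind (Z := fun x => ideal_mul I P (r *: x))).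
- by rewrite scaler0; apply: ideal_mul0.
- by move=> x1 x2 h1 h2; rewrite scalerDr; apply: ideal_mulD.
- by move=> a p Ia Pp; rewrite scalerA; apply: ideal_mul_gen => //; apply: I_lideal.
Qed.

Lemma submod_ideal_mul : submod (ideal_mul I P).
Proof.
split; [exact: ideal_mul0 | by move=> *; apply: ideal_mulD | by move=> *; apply: ideal_mulZ].
Qed.

End IdealMul.

Lemma ideal_mulS (R : pzRingType) (M : lmodType R) (I I' : R -> Prop) (P P' : M -> Prop) :
  (forall a, I a -> I' a) -> (forall p, P p -> P' p) ->
  forall x, ideal_mul I P x -> ideal_mul I' P' x.
Proof.
move=> II' PP'; apply: ideal_mul_ind; [exact: ideal_mul0 | by move=> *; apply: ideal_mulD |].
by move=> a p Ia Pp; apply: ideal_mul_gen; [apply: II' | apply: PP'].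
Qed.

Lemma ass_lideal (R A : pzRingType) (phi : {rmorphism R -> A}) r a :
  ass phi a -> ass phi (r * a).
Proof. by rewrite /ass rmorphM => ->; rewrite mulr0. Qed.

Section SemilinearMaps.
Variables (R K : pzRingType) (phi : R -> K) (M : lmodType R) (X : lmodType K).
Variables (P : M -> Prop) (f : M -> X).
Hypotheses (Psub : submod P) (f_sl : semilin_on phi P f).

Lemma semilin_on0 : f 0 = 0.
Proof.
case: f_sl => fD _; apply: (addrI (f 0)).
by rewrite -fD ?addr0 //; apply: submod0.
Qed.

Lemma semilin_onB x y : P x -> P y -> f (x - y) = f x - f y.
Proof.
case: f_sl => fD _ Px Py; apply: (addIr (f y)).
by rewrite -fD ?subrK //; apply: submodB.
Qed.

Lemma semilin_on_ass z : ideal_mul (ass phi) P z -> f z = 0.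
Proof.
move=> z_a; case: f_sl => fD fZ.
suff: P z /\ f z = 0 by case.
move: z z_a; apply: ideal_mul_ind => [|x y [Px fx] [Py fy]|a p phia Pp].
- by split; [apply: submod0 | apply: semilin_on0].
- by split; [apply: submodD | rewrite fD // fx fy addr0].
- by split; [apply: submodZ | rewrite fZ // phia scale0r].
Qed.

End SemilinearMaps.

Section LinearMaps.
Variables (R : pzRingType) (M M' : lmodType R) (g : M -> M').
Hypothesis g_lin : semilin_on id (fun _ => True) g.

Lemma submod_image : submod (fun y => exists x, g x = y).
Proof.
have g0 := semilin_on0 (submodT M) g_lin; case: g_lin => gD gZ; split.
- by exists 0.
- by move=> _ _ [x1 <-] [x2 <-]; exists (x1 + x2); rewrite gD.
- by move=> r _ [x <-]; exists (r *: x); rewrite gZ.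
Qed.

Lemma ideal_mul_lift I y : ideal_mul I (fun y => exists x, g x = y) y ->
  exists2 x, ideal_mul I (fun _ => True) x & g x = y.
Proof.
have g0 := semilin_on0 (submodT M) g_lin; case: g_lin => gD gZ.
move: y; apply: ideal_mul_ind.
- by exists 0; [apply: ideal_mul0 |].
- move=> _ _ [x1 Ix1 <-] [x2 Ix2 <-].
  by exists (x1 + x2); [apply: ideal_mulD | rewrite gD].
- move=> a _ Ia [x <-].
  by exists (a *: x); [apply: ideal_mul_gen | rewrite gZ].
Qed.

End LinearMaps.

Section KLinearMaps.
Variables (K : pzRingType) (T X Y : lmodType K).

Lemma klin0 (g : T -> X) : klin g -> g 0 = 0.
Proof. by case=> gD _; apply: (addrI (g 0)); rewrite -gD !addr0. Qed.

Lemma klin_id : klin (@id T). Proof. by []. Qed.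

Lemma klin_zero : klin (fun _ : T => 0 : X).
Proof. by split=> *; rewrite ?addr0 ?scaler0. Qed.

Lemma klin_comp (g : T -> X) (h : X -> Y) : klin g -> klin h -> klin (h \o g).
Proof. by move=> [gD gZ] [hD hZ]; split=> *; rewrite /= ?gD ?hD ?gZ ?hZ. Qed.

End KLinearMaps.

Section TensorUniqueness.
Variables (R K : pzRingType) (phi : R -> K) (M : lmodType R) (P Q : M -> Prop).
Variables (T : lmodType K) (io : M -> T).
Hypothesis io_tensor : is_tensor_quot phi P Q io.

Lemma is_tensor_quot_ext (X : lmodType K) (g g' : T -> X) :
  klin g -> klin g' -> (forall x, P x -> g (io x) = g' (io x)) -> g =1 g'.
Proof.
case: io_tensor => [[ioD ioZ] ioQ io_univ] gk g'k g_g'.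
have [gD gZ] := gk.
have f_sl : semilin_on phi P (g \o io) by split=> *; rewrite /= ?ioD ?ioZ ?gD ?gZ.
have f_Q x : Q x -> (g \o io) x = 0 by move=> Qx; rewrite /= ioQ // klin0.
have [h [_ _ h_uniq]] := io_univ _ _ f_sl f_Q.
by move=> t; rewrite (h_uniq g) ?(h_uniq g') // => x Px; rewrite /= g_g'.
Qed.

Lemma is_tensor_quot_trivial : (forall x, P x -> io x = 0) -> forall t : T, t = 0.
Proof.
move=> io0; apply: (is_tensor_quot_ext (@klin_id _ _) (@klin_zero _ _ _)) => x Px.
exact: io0.
Qed.

End TensorUniqueness.

Section SubmoduleType.
Variables (R : pzRingType) (M : lmodType R) (U : M -> Prop).
Hypothesis Usub : submod U.

(* [Usub] is unused, but makes the carrier [submodule Usub] depend on it, as its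
   lmodType instance does. *)
Definition submem of submod U : {pred M} := fun x => `[< U x >].

Fact submem_closed : subsemimod_closed (submem Usub).
Proof.
case: Usub => U0 UD UZ; split; first split.
- exact/asboolP.
- by move=> x y /asboolP Ux /asboolP Uy; apply/asboolP; apply: UD.
- by move=> r x /asboolP Ux; apply/asboolP; apply: UZ.
Qed.

HB.instance Definition _ := GRing.isSubmodClosed.Build R M (submem Usub) submem_closed.

Record submodule := Submodule { subval : M; _ : subval \in submem Usub }.
HB.instance Definition _ := [isSub for subval].
HB.instance Definition _ := [Choice of submodule by <:].
HB.instance Definition _ := [SubChoice_isSubLmodule of submodule by <:].

Lemma subvalP (x : submodule) : U (subval x).
Proof. by apply/asboolP; case: x. Qed.

Lemma subval_lin : semilin_on id (fun _ => True) subval.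
Proof. by []. Qed.

Lemma insubd_val (x : M) : U x -> subval (insubd 0 x) = x.
Proof. by move=> Ux; apply: insubdK; apply/asboolP. Qed.

Lemma submod_subval_preim (V : M -> Prop) :
  submod V -> submod (fun z : submodule => V (subval z)).
Proof.
by move=> Vsub; split=> [|x y|r x]; [apply: submod0 | apply: submodD | apply: submodZ].
Qed.

Lemma ideal_mul_subval I (z : submodule) :
  ideal_mul I (fun _ => True) z -> ideal_mul I U (subval z).
Proof.
move: z; apply: ideal_mul_ind; [exact: ideal_mul0 | by move=> *; apply: ideal_mulD |].
by move=> a p Ia _; apply: ideal_mul_gen => //; apply: subvalP.
Qed.

End SubmoduleType.

Section TensorOfSubmodule.
Variables (R K : pzRingType) (phi : R -> K) (M : lmodType R) (P Q : M -> Prop).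
Hypotheses (Psub : submod P) (QP : forall x, Q x -> P x).
Variables (T : lmodType K) (io : submodule Psub -> T).
Hypothesis io_tensor : is_tensor_quot phi (fun _ => True) (fun y => Q (subval y)) io.

Lemma is_tensor_quot_submodule : is_tensor_quot phi P Q (fun x => io (insubd 0 x)).
Proof.
have insubdD x y : P x -> P y -> insubd 0 (x + y) = insubd 0 x + insubd 0 y :> submodule Psub.
  by move=> Px Py; apply: val_inj; rewrite /= !insubd_val //; apply: submodD.
have insubdZ r x : P x -> insubd 0 (r *: x) = r *: insubd 0 x :> submodule Psub.
  by move=> Px; apply: val_inj; rewrite /= !insubd_val //; apply: submodZ.
case: io_tensor => [[ioD ioZ] ioQ io_univ]; split.
- by split=> [x y Px Py|r x Px]; rewrite ?insubdD ?insubdZ ?ioD ?ioZ.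
- by move=> x Qx; apply: ioQ; rewrite insubd_val //; apply: QP.
move=> X f [fD fZ] fQ.
have f_sl : semilin_on phi (fun _ => True) (f \o @subval _ _ _ Psub).
  by split=> [x y _ _|r x _]; rewrite /= ?fD ?fZ //; apply: subvalP.
have [g [gk g_io g_uniq]] := io_univ _ _ f_sl (fun y => fQ (subval y)).
exists g; split=> // [x Px|g' g'k g'_io]; first by rewrite g_io //= insubd_val.
apply: g_uniq => // y _; rewrite /= -g'_io ?valKd //; exact: subvalP.
Qed.

End TensorOfSubmodule.

(** * The module of fractions A ⊗_R N/Q *)

Definition left_fractions (R K : pzRingType) (S : R -> Prop) (phi : R -> K) : Prop :=
  forall a : K, exists s r, S s /\ phi s * a = phi r.

Section LeftFractions.
Variables (R K : pzRingType) (S : R -> Prop) (phi : {rmorphism R -> K}).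
Hypotheses (S1 : S 1) (SM : forall s t, S s -> S t -> S (s * t)).
Hypotheses (phi_inv : inverts S phi) (phi_frac : left_fractions S phi).

Lemma loc_inv_ex s : exists y : K, S s -> phi s * y = 1 /\ y * phi s = 1.
Proof. by case: (pselect (S s)) => [/phi_inv [y yV]|nSs]; [exists y | exists 0]. Qed.

Definition loc_inv s : K := projT1 (cid (loc_inv_ex s)).

Lemma mulr_locV s : S s -> phi s * loc_inv s = 1.
Proof. by rewrite /loc_inv; case: cid => y /= yV /yV []. Qed.

Lemma mul_locVr s : S s -> loc_inv s * phi s = 1.
Proof. by rewrite /loc_inv; case: cid => y /= yV /yV []. Qed.

Lemma loc_inv_clear k s a r u :
  S s -> phi s * a = phi r -> k * loc_inv s = phi u -> k * a = phi (u * r).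
Proof.
by move=> Ss ea eu; rewrite rmorphM -eu -ea -mulrA (mulrA (loc_inv s)) mul_locVr // mul1r.
Qed.

Lemma ore_left a t : S t -> exists u b, S u /\ phi u * a = phi b * phi t.
Proof.
move=> St; have [u [b [Su e]]] := phi_frac (a * loc_inv t).
by exists u, b; split=> //; rewrite -e -!mulrA mul_locVr // mulr1.
Qed.

Lemma common_denom a b : exists s r r', [/\ S s, phi s * a = phi r & phi s * b = phi r'].
Proof.
have [s1 [r1 [Ss1 e1]]] := phi_frac a; have [s2 [r2 [Ss2 e2]]] := phi_frac b.
have [u [v [Su e]]] := ore_left (phi s2) Ss1.
exists (u * s2), (v * r1), (u * r2); split; first exact: SM.
- by rewrite rmorphM e -mulrA e1 rmorphM.
- by rewrite rmorphM -mulrA e2 rmorphM.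
Qed.

Lemma common_denom3 a b c : exists s r1 r2 r3,
  [/\ S s, phi s * a = phi r1, phi s * b = phi r2 & phi s * c = phi r3].
Proof.
have [s [ra [rb [Ss ea eb]]]] := common_denom a b.
have [w [u [rc [Sw eu ec]]]] := common_denom (loc_inv s) c.
exists w, (u * ra), (u * rb), rc; split=> //.
- exact: loc_inv_clear Ss ea eu.
- exact: loc_inv_clear Ss eb eu.
Qed.

Variables (N : lmodType R) (Q : N -> Prop).
Hypothesis Qsub : submod Q.

Definition loc_null (x : N) : Prop :=
  exists2 q, Q q & ideal_mul (ass phi) (fun _ => True) (x - q).

Definition loc_torsion (x : N) : Prop := exists2 t, S t & loc_null (t *: x).

Lemma submod_loc_null : submod loc_null.
Proof.
have asub := submod_ideal_mul (fun _ : N => True) (@ass_lideal _ _ phi).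
split.
- by exists 0; [apply: submod0 | rewrite subrr; apply: ideal_mul0].
- move=> x y [q Qq xq] [q' Qq' yq']; exists (q + q'); first exact: submodD.
  by rewrite opprD addrACA; apply: submodD.
- move=> r x [q Qq xq]; exists (r *: q); first exact: submodZ.
  by rewrite -scalerBr; apply: submodZ.
Qed.

Lemma loc_null_Q x : Q x -> loc_null x.
Proof. by move=> Qx; exists x => //; rewrite subrr; apply: ideal_mul0. Qed.

Lemma loc_null_ass r r' p : phi r = phi r' -> loc_null (r *: p - r' *: p).
Proof.
move=> e; exists 0; first exact: submod0.
by rewrite subr0 -scalerBl; apply: ideal_mul_gen => //; rewrite /ass rmorphB e subrr.
Qed.

Lemma loc_null_torsion x : loc_null x -> loc_torsion x.
Proof. by exists 1; rewrite ?scale1r. Qed.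

Lemma submod_loc_torsion : submod loc_torsion.
Proof.
have nsub := submod_loc_null; split.
- exact/loc_null_torsion/(submod0 nsub).
- move=> x y [t1 St1 x0] [t2 St2 y0].
  have [u [b [Su e]]] := ore_left (phi t1) St2.
  exists (u * t1); first exact: SM.
  have -> : (u * t1) *: (x + y) =
      u *: (t1 *: x) + (b *: (t2 *: y) + ((u * t1) *: y - (b * t2) *: y)).
    by rewrite scalerDr !scalerA [(b * t2) *: y + _]addrC subrK.
  apply: (submodD nsub); first exact: (submodZ nsub).
  apply: (submodD nsub); first exact: (submodZ nsub).
  by apply: loc_null_ass; rewrite !rmorphM.
- move=> r x [t St x0]; have [u [b [Su e]]] := ore_left (phi r) St.
  exists u => //; rewrite scalerA -(subrK ((b * t) *: x) ((u * r) *: x)).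
  apply: (submodD nsub); first by apply: loc_null_ass; rewrite !rmorphM.
  by rewrite -scalerA; apply: (submodZ nsub).
Qed.

Lemma loc_torsion_cancel s x : S s -> loc_torsion (s *: x) -> loc_torsion x.
Proof. by move=> Ss [t St tsx]; exists (t * s); [apply: SM | rewrite -scalerA]. Qed.

Lemma loc_torsion_ass u u' v v' p q : phi u = phi u' -> phi v = phi v' ->
  loc_torsion (u' *: p - v' *: q) -> loc_torsion (u *: p - v *: q).
Proof.
move=> eu ev tor; rewrite -(subrK (u' *: p - v' *: q) (u *: p - v *: q)) subrACA.
apply: submodD submod_loc_torsion _ _ _ tor.
by apply: loc_null_torsion; apply: submodB submod_loc_null _ _ _ _; apply: loc_null_ass.
Qed.

(* A pair [(a, n)] stands for [a ⊗ n]. *)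
Definition frac_rel (c d : K * N) : Prop := exists s r r',
  [/\ S s, phi s * c.1 = phi r, phi s * d.1 = phi r' & loc_torsion (r *: c.2 - r' *: d.2)].

Lemma frac_rel_indep c d s r r' : frac_rel c d -> S s ->
  phi s * c.1 = phi r -> phi s * d.1 = phi r' -> loc_torsion (r *: c.2 - r' *: d.2).
Proof.
move=> [t [r1 [r1' [St e1 e1' tor]]]] Ss e e'.
have [u [b [Su eu]]] := ore_left (phi s) St.
have clear x y z : phi s * x = phi y -> phi t * x = phi z -> phi (u * y) = phi (b * z).
  by move=> ey ez; rewrite !rmorphM -ey -ez !mulrA eu.
apply: (loc_torsion_cancel Su); rewrite scalerBr !scalerA.
apply: (loc_torsion_ass (clear _ _ _ e e1) (clear _ _ _ e' e1')).
by rewrite -!scalerA -scalerBr; apply: submodZ submod_loc_torsion _ _ _.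
Qed.

Lemma frac_rel_refl c : frac_rel c c.
Proof.
have [s [r [Ss e]]] := phi_frac c.1; exists s, r, r; split=> //.
by rewrite subrr; apply: submod0 submod_loc_torsion.
Qed.

Lemma frac_rel_sym c d : frac_rel c d -> frac_rel d c.
Proof.
case=> s [r [r' [Ss e e' tor]]]; exists s, r', r; split=> //.
by rewrite -opprB; apply: submodN submod_loc_torsion _ _.
Qed.

Lemma frac_rel_trans c d e : frac_rel c d -> frac_rel d e -> frac_rel c e.
Proof.
move=> cd de; have [s [r1 [r2 [r3 [Ss e1 e2 e3]]]]] := common_denom3 c.1 d.1 e.1.
exists s, r1, r3; split=> //; rewrite -(subrKA (r2 *: d.2)).
apply: (submodD submod_loc_torsion).
- exact: frac_rel_indep cd Ss e1 e2.
- exact: frac_rel_indep de Ss e2 e3.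
Qed.

Definition frac_eqv : rel (K * N) := fun c d => `[< frac_rel c d >].

Lemma frac_eqv_refl : reflexive frac_eqv.
Proof. by move=> c; apply/asboolP; apply: frac_rel_refl. Qed.

Lemma frac_eqv_sym : symmetric frac_eqv.
Proof. by move=> c d; apply/asboolP/asboolP; apply: frac_rel_sym. Qed.

Lemma frac_eqv_trans : transitive frac_eqv.
Proof. by move=> d c e /asboolP cd /asboolP de; apply/asboolP; apply: frac_rel_trans de. Qed.

Canonical frac_equiv := EquivRel frac_eqv frac_eqv_refl frac_eqv_sym frac_eqv_trans.

Definition frac_tensor := {eq_quot frac_equiv}.
HB.instance Definition _ := EqQuotient.on frac_tensor.
HB.instance Definition _ := Choice.on frac_tensor.

Local Notation frac a p := (\pi_frac_tensor (a, p)).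

Lemma eq_pi c d : frac_rel c d -> \pi_frac_tensor c = \pi_frac_tensor d.
Proof. by move=> cd; apply/eqquotP/asboolP. Qed.

Lemma pi_rel c d : \pi_frac_tensor c = \pi_frac_tensor d -> frac_rel c d.
Proof. by move/eqquotP/asboolP. Qed.

Lemma repr_rel c : frac_rel (repr (\pi_frac_tensor c)) c.
Proof. by apply: pi_rel; rewrite reprK. Qed.

Lemma frac_rel_scale a c d : frac_rel c d -> frac_rel (a * c.1, c.2) (a * d.1, d.2).
Proof.
case=> t [r [r' [St e e' tor]]]; have [u [b [Su eu]]] := ore_left a St.
exists u, (b * r), (b * r'); split=> //=.
- by rewrite mulrA eu -mulrA e rmorphM.
- by rewrite mulrA eu -mulrA e' rmorphM.
- by rewrite -!scalerA -scalerBr; apply: (submodZ submod_loc_torsion).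
Qed.

Definition frac_scale a (X : frac_tensor) : frac_tensor := frac (a * (repr X).1) ((repr X).2).

Lemma frac_scale_pi a b p : frac_scale a (frac b p) = frac (a * b) p.
Proof. exact/eq_pi/(frac_rel_scale a (repr_rel (b, p))). Qed.

Lemma common_denom_sig a b : {t : R * R * R |
  [/\ S t.1.1, phi t.1.1 * a = phi t.1.2 & phi t.1.1 * b = phi t.2]}.
Proof. by apply: cid; have [s [r [r' ?]]] := common_denom a b; exists (s, r, r'). Qed.

Definition frac_add (X Y : frac_tensor) : frac_tensor :=
  let: (s, r, r') := sval (common_denom_sig (repr X).1 (repr Y).1) in
  frac (loc_inv s) (r *: (repr X).2 + r' *: (repr Y).2).

Lemma frac_add_pi a p b q s r r' : S s -> phi s * a = phi r -> phi s * b = phi r' ->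
  frac_add (frac a p) (frac b q) = frac (loc_inv s) (r *: p + r' *: q).
Proof.
move=> Ss e e'; rewrite /frac_add; case: common_denom_sig => -[[s0 r0] r0'] /= [Ss0 e0 e0'].
have [t [u0 [u [St eu0 eu]]]] := common_denom (loc_inv s0) (loc_inv s).
apply: eq_pi; exists t, u0, u; split=> //=.
rewrite !scalerDr !scalerA opprD addrACA; apply: (submodD submod_loc_torsion).
- exact: frac_rel_indep (repr_rel (a, p)) St
    (loc_inv_clear Ss0 e0 eu0) (loc_inv_clear Ss e eu).
- exact: frac_rel_indep (repr_rel (b, q)) St
    (loc_inv_clear Ss0 e0' eu0) (loc_inv_clear Ss e' eu).
Qed.

Lemma pi_clear_denom a p t r :
  S t -> phi t * a = phi r -> frac a p = frac (loc_inv t) (r *: p).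
Proof.
move=> St e; apply: eq_pi; exists t, r, 1; split; rewrite /= ?mulr_locV ?rmorph1 //.
by rewrite scale1r subrr; apply: (submod0 submod_loc_torsion).
Qed.

Lemma frac_add_common s m n :
  S s -> frac_add (frac (loc_inv s) m) (frac (loc_inv s) n) = frac (loc_inv s) (m + n).
Proof.
move=> Ss; have e : phi s * loc_inv s = phi 1 by rewrite rmorph1 mulr_locV.
by rewrite (frac_add_pi m n Ss e e) !scale1r.
Qed.

Definition frac_zero : frac_tensor := frac 0 0.

Definition frac_opp (X : frac_tensor) : frac_tensor := frac_scale (-1) X.

Lemma frac_zero_common s : S s -> frac_zero = frac (loc_inv s) 0.
Proof.
move=> Ss; have e : phi s * 0 = phi 0 by rewrite mulr0 rmorph0.
by rewrite /frac_zero (pi_clear_denom 0 Ss e) scaler0.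
Qed.

Lemma frac_tensor_common2 (X Y : frac_tensor) :
  exists s m n, [/\ S s, X = frac (loc_inv s) m & Y = frac (loc_inv s) n].
Proof.
have [s [r [r' [Ss e e']]]] := common_denom (repr X).1 (repr Y).1.
exists s, (r *: (repr X).2), (r' *: (repr Y).2); split=> //.
- by rewrite -(pi_clear_denom _ Ss e) -surjective_pairing reprK.
- by rewrite -(pi_clear_denom _ Ss e') -surjective_pairing reprK.
Qed.

Lemma frac_tensor_common3 (X Y Z : frac_tensor) : exists s m n o,
  [/\ S s, X = frac (loc_inv s) m, Y = frac (loc_inv s) n & Z = frac (loc_inv s) o].
Proof.
have [s [r1 [r2 [r3 [Ss e1 e2 e3]]]]] := common_denom3 (repr X).1 (repr Y).1 (repr Z).1.
exists s, (r1 *: (repr X).2), (r2 *: (repr Y).2), (r3 *: (repr Z).2); split=> //.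
- by rewrite -(pi_clear_denom _ Ss e1) -surjective_pairing reprK.
- by rewrite -(pi_clear_denom _ Ss e2) -surjective_pairing reprK.
- by rewrite -(pi_clear_denom _ Ss e3) -surjective_pairing reprK.
Qed.

Lemma frac_addA : associative frac_add.
Proof.
move=> X Y Z; have [s [m [n [o [Ss -> -> ->]]]]] := frac_tensor_common3 X Y Z.
by rewrite !frac_add_common // addrA.
Qed.

Lemma frac_addC : commutative frac_add.
Proof.
move=> X Y; have [s [m [n [Ss -> ->]]]] := frac_tensor_common2 X Y.
by rewrite !frac_add_common // addrC.
Qed.

Lemma frac_add0 : left_id frac_zero frac_add.
Proof.
move=> X; have [s [m [_ [Ss -> _]]]] := frac_tensor_common2 X X.
by rewrite (frac_zero_common Ss) frac_add_common // add0r.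
Qed.

Lemma frac_addN : left_inverse frac_zero frac_opp frac_add.
Proof.
move=> X; have [s [m [_ [Ss -> _]]]] := frac_tensor_common2 X X.
have e : phi s * (-1 * loc_inv s) = phi (-1) by rewrite mulN1r mulrN mulr_locV // rmorphN1.
rewrite /frac_opp frac_scale_pi (pi_clear_denom _ Ss e) frac_add_common //.
by rewrite scaleN1r addNr -frac_zero_common.
Qed.

HB.instance Definition _ :=
  GRing.isZmodule.Build frac_tensor frac_addA frac_addC frac_add0 frac_addN.

Lemma frac_addE (X Y : frac_tensor) : X + Y = frac_add X Y. Proof. by []. Qed.

Lemma frac_scaleA a b (X : frac_tensor) : frac_scale a (frac_scale b X) = frac_scale (a * b) X.
Proof.
by elim/quotW: X => -[c p]; rewrite [frac_scale b _]frac_scale_pi !frac_scale_pi mulrA.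
Qed.

Lemma frac_scale1 : left_id 1 frac_scale.
Proof. by elim/quotW => -[c p]; rewrite frac_scale_pi mul1r. Qed.

Lemma frac_scaleDr : right_distributive frac_scale +%R.
Proof.
move=> a X Y; have [s [m [n [Ss -> ->]]]] := frac_tensor_common2 X Y.
have [t [r [St e]]] := phi_frac (a * loc_inv s).
rewrite /= !frac_addE frac_add_common // !frac_scale_pi !(pi_clear_denom _ St e).
by rewrite frac_add_common // scalerDr.
Qed.

Lemma frac_scaleDl (X : frac_tensor) : {morph frac_scale^~ X : a b / a + b}.
Proof.
move=> a b; have [s [m [_ [Ss -> _]]]] := frac_tensor_common2 X X.
have [t [r [r' [St ea eb]]]] := common_denom (a * loc_inv s) (b * loc_inv s).
have eab : phi t * ((a + b) * loc_inv s) = phi (r + r').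
  by rewrite mulrDl mulrDr ea eb rmorphD.
rewrite frac_addE !frac_scale_pi (pi_clear_denom _ St ea) (pi_clear_denom _ St eb).
rewrite (pi_clear_denom _ St eab).
by rewrite frac_add_common // scalerDl.
Qed.

HB.instance Definition _ := GRing.Zmodule_isLmodule.Build K frac_tensor
  frac_scaleA frac_scale1 frac_scaleDr frac_scaleDl.

Lemma frac_scaleE a (X : frac_tensor) : a *: X = frac_scale a X. Proof. by []. Qed.

Definition frac_iota (p : N) : frac_tensor := frac 1 p.

Lemma frac_iota_inv1 p : frac_iota p = frac (loc_inv 1) p.
Proof.
have e : phi 1 * 1 = phi 1 by rewrite mulr1.
by rewrite /frac_iota (pi_clear_denom p S1 e) scale1r.
Qed.

Lemma pi_frac_iota a p : frac a p = a *: frac_iota p.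
Proof. by rewrite frac_scaleE frac_scale_pi mulr1. Qed.

Lemma frac_iotaD x y : frac_iota (x + y) = frac_iota x + frac_iota y.
Proof. by rewrite !frac_iota_inv1 frac_addE frac_add_common. Qed.

Lemma frac_iotaZ r x : frac_iota (r *: x) = phi r *: frac_iota x.
Proof.
have e : phi 1 * phi r = phi r by rewrite rmorph1 mul1r.
by rewrite -pi_frac_iota frac_iota_inv1 (pi_clear_denom x S1 e).
Qed.

Lemma frac_iota_Q x : Q x -> frac_iota x = 0.
Proof.
move=> Qx; apply: eq_pi; exists 1, 1, 0.
split=> //=; rewrite ?mulr1 ?mulr0 ?rmorph1 ?rmorph0 //.
by rewrite scale1r scaler0 subr0; apply/loc_null_torsion/loc_null_Q.
Qed.

Lemma frac_iota_eq0 p : frac_iota p = 0 -> loc_torsion p.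
Proof.
move/pi_rel => rel; have := frac_rel_indep rel S1 (r := 1) (r' := 0).
by rewrite scale1r scaler0 subr0; apply; rewrite /= ?mulr1 ?mulr0 ?rmorph1 ?rmorph0.
Qed.

Lemma frac_tensor_denom (X : frac_tensor) : exists s p, S s /\ phi s *: X = frac_iota p.
Proof.
have [s [m [_ [Ss -> _]]]] := frac_tensor_common2 X X.
by exists s, m; rewrite frac_scaleE frac_scale_pi mulr_locV.
Qed.

Section Lift.
Variables (X : lmodType K) (f : N -> X).
Hypotheses (f_sl : semilin_on phi (fun _ => True) f) (f_Q : forall x, Q x -> f x = 0).

Lemma lift_loc_torsion x : loc_torsion x -> f x = 0.
Proof.
have [fD fZ] := f_sl.
have f_null y : loc_null y -> f y = 0.
  case=> q Qq yq; rewrite -(subrK q y) fD // (f_Q Qq) addr0.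
  exact: (semilin_on_ass (submodT N) f_sl).
case=> t St /f_null; rewrite fZ // => ftx.
by apply: (inverts_scalerI phi_inv St); rewrite ftx scaler0.
Qed.

Lemma lift_frac_rel c d : frac_rel c d -> c.1 *: f c.2 = d.1 *: f d.2.
Proof.
case=> s [r [r' [Ss e e' /lift_loc_torsion]]]; have [fD fZ] := f_sl.
rewrite (semilin_onB (submodT N) f_sl) // => /eqP; rewrite subr_eq0 => /eqP frr'.
by apply: (inverts_scalerI phi_inv Ss); rewrite !scalerA e e' -!fZ.
Qed.

Definition frac_lift (Y : frac_tensor) : X := (repr Y).1 *: f (repr Y).2.

Lemma frac_lift_pi a p : frac_lift (frac a p) = a *: f p.
Proof. exact: lift_frac_rel (repr_rel (a, p)). Qed.

Lemma frac_lift_klin : klin frac_lift.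
Proof.
have [fD fZ] := f_sl; split=> [Y Z|a Y]; last first.
  by elim/quotW: Y => -[b p]; rewrite frac_scaleE frac_scale_pi !frac_lift_pi scalerA.
elim/quotW: Y => -[a p]; elim/quotW: Z => -[b q].
have [s [r [r' [Ss e e']]]] := common_denom a b.
rewrite frac_addE (frac_add_pi p q Ss e e') !frac_lift_pi fD // !fZ //.
apply: (inverts_scalerI phi_inv Ss).
by rewrite scalerA mulr_locV // scale1r scalerDr !scalerA e e'.
Qed.

Lemma frac_lift_iota p : frac_lift (frac_iota p) = f p.
Proof. by rewrite frac_lift_pi scale1r. Qed.

Lemma frac_lift_uniq g : klin g -> (forall p, g (frac_iota p) = f p) -> g =1 frac_lift.
Proof.
by case=> _ gZ g_iota; elim/quotW => -[a p]; rewrite frac_lift_pi pi_frac_iota gZ g_iota.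
Qed.

End Lift.

Lemma frac_iota_tensor : is_tensor_quot phi (fun _ => True) Q frac_iota.
Proof.
split; [by split=> *; rewrite ?frac_iotaD ?frac_iotaZ | exact: frac_iota_Q |].
move=> X f f_sl f_Q; exists (frac_lift f); split.
- exact: frac_lift_klin.
- by move=> p _; apply: frac_lift_iota.
- by move=> g gk g_iota t; apply: frac_lift_uniq => // p; apply: g_iota.
Qed.

Section AnyTensor.
Variables (T : lmodType K) (io : N -> T).
Hypothesis io_tensor : is_tensor_quot phi (fun _ => True) Q io.

Lemma is_tensor_quot_to_frac : exists g : T -> frac_tensor, exists2 h : frac_tensor -> T,
  [/\ klin g, klin h & forall p, g (io p) = frac_iota p] & forall t, h (g t) = t.
Proof.
have [io_sl io_Q io_univ] := io_tensor.
have [iota_sl iota_Q iota_univ] := frac_iota_tensor.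
have [g [gk g_io _]] := io_univ _ _ iota_sl iota_Q.
have [h [hk h_iota _]] := iota_univ _ _ io_sl io_Q.
exists g, h; first by split=> // p; apply: g_io.
apply: (is_tensor_quot_ext io_tensor (klin_comp gk hk) (@klin_id _ _)) => p _.
by rewrite /= g_io // h_iota.
Qed.

Lemma is_tensor_quot_denom t : exists s p, S s /\ phi s *: t = io p.
Proof.
have [g [h [_ [_ hZ] g_io] hg]] := is_tensor_quot_to_frac.
have [s [p [Ss e]]] := frac_tensor_denom (g t).
by exists s, p; split=> //; rewrite -[t]hg -hZ e -g_io hg.
Qed.

Lemma is_tensor_quot_eq0 p : io p = 0 -> loc_torsion p.
Proof.
have [g [h [gk _ g_io] _]] := is_tensor_quot_to_frac.
by move=> iop0; apply: frac_iota_eq0; rewrite -g_io iop0 klin0.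
Qed.

End AnyTensor.

End LeftFractions.

(** * Exactness of localization *)

Lemma localizable_left_fractions (R A : pzRingType) (k : loc_kind) (S : R -> Prop)
  (phi : {rmorphism R -> A}) : localizable k S phi -> left_fractions S phi.
Proof.
case=> _ frac _ a; have [s [r [x [Ss _ sx ->]]]] := frac a.
by exists s, r; rewrite mulrA sx mul1r.
Qed.

Section QuotientLocalization.
Variables (R A Rb B : pzRingType) (S : R -> Prop) (phi : {rmorphism R -> A}).
Variables (pi : {rmorphism R -> Rb}) (psi : {rmorphism Rb -> B}).
Hypotheses (phi_univ : univ_loc S phi) (phi_frac : left_fractions S phi).
Hypothesis pi_surj : forall y, exists r, pi r = y.
Hypothesis pi_ker : forall r, pi r = 0 <-> ass phi r.
Hypothesis psi_univ : univ_loc (img_set pi S) psi.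

Lemma loc_quotient_inverts : inverts S (psi \o pi).
Proof. by move=> s Ss; apply: psi_univ.1; exists s. Qed.

Lemma factor_through_quotient : exists j : {rmorphism Rb -> A}, forall r, j (pi r) = phi r.
Proof.
pose j y := phi (projT1 (cid (pi_surj y))).
have j_pi r : j (pi r) = phi r.
  rewrite /j; case: cid => r' /= e; apply/eqP; rewrite -subr_eq0 -rmorphB.
  by apply/eqP/pi_ker; rewrite rmorphB e subrr.
have j_nmod : nmod_morphism j.
  split=> [|y1 y2]; first by rewrite -(rmorph0 pi) j_pi rmorph0.
  by have [r1 <-] := pi_surj y1; have [r2 <-] := pi_surj y2; rewrite -rmorphD !j_pi rmorphD.
have j_monoid : monoid_morphism j.
  split=> [|y1 y2]; first by rewrite -(rmorph1 pi) j_pi rmorph1.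
  by have [r1 <-] := pi_surj y1; have [r2 <-] := pi_surj y2; rewrite -rmorphM !j_pi rmorphM.
pose jN := GRing.isNmodMorphism.Build _ _ j j_nmod.
pose jM := GRing.isMonoidMorphism.Build _ _ j j_monoid.
pose jR : {rmorphism Rb -> A} := HB.pack j jN jM.
by exists jR.
Qed.

Lemma loc_quotient_to_loc : exists h : {rmorphism B -> A}, forall r, h (psi (pi r)) = phi r.
Proof.
have [j j_pi] := factor_through_quotient.
have j_inv : inverts (img_set pi S) j by move=> _ [s [Ss <-]]; rewrite j_pi; apply: phi_univ.1.
by have [h [h_psi _]] := psi_univ.2 _ j j_inv; exists h => r; rewrite h_psi.
Qed.

Lemma loc_quotient_ass r : psi (pi r) = 0 -> phi r = 0.
Proof. by have [h h_psi] := loc_quotient_to_loc; rewrite -h_psi => ->; rewrite rmorph0. Qed.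

Lemma loc_quotient_fractions : left_fractions S (psi \o pi).
Proof.
have [h h_psi] := loc_quotient_to_loc.
pose phiB : {rmorphism R -> B} := (psi \o pi)%FUN.
have [g [g_phi _]] := phi_univ.2 _ phiB loc_quotient_inverts.
have gh b : g (h b) = b.
  have [idB [_ id_uniq]] := psi_univ.2 _ psi (fun _ ys => psi_univ.1 _ ys).
  pose gh : {rmorphism B -> B} := (g \o h)%FUN.
  rewrite -[g (h b)]/(gh b) (id_uniq gh) -?(id_uniq idfun) // => y.
  by have [r <-] := pi_surj y; rewrite /gh /= h_psi g_phi.
move=> b; have [s [r [Ss e]]] := phi_frac (h b).
by exists s, r; split=> //; rewrite -[b]gh -g_phi -rmorphM e g_phi.
Qed.

End QuotientLocalization.

Lemma loc_exact_injective (R A : pzRingType) (phi : R -> A) : loc_functor_exact phi ->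
  forall (M1 M2 : lmodType R) (f : M1 -> M2),
  semilin_on id (fun _ => True) f -> (forall x, f x = 0 -> x = 0) ->
  forall (T1 T2 : lmodType A) (i1 : M1 -> T1) (i2 : M2 -> T2),
  is_tensor phi i1 -> is_tensor phi i2 ->
  forall F : T1 -> T2, klin F -> (forall m, F (i1 m) = i2 (f m)) ->
  forall t, F t = 0 -> t = 0.
Proof.
move=> loc_exact M1 M2 f f_lin f_inj T1 T2 i1 i2 i1_t i2_t F Fk F_i t Ft0.
have zero_lin : semilin_on id (fun _ => True) (fun _ : M1 => 0 : M1).
  by split=> *; rewrite ?addr0 ?scaler0.
have exact_M1 y : f y = 0 <-> exists x : M1, 0 = y.
  by split=> [/f_inj ->|[x <-]]; [exists 0 | apply: semilin_on0 (submodT M1) f_lin].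
have i1_0 (m : M1) : 0 = i1 0 by case: i1_t => _ i1_eq0 _; rewrite i1_eq0.
have [u <-] := (loc_exact _ _ _ _ _ zero_lin f_lin exact_M1 _ _ _ _ _ _ i1_t i1_t i2_t
  _ _ (@klin_zero _ _ _) Fk i1_0 F_i t).1 Ft0.
by [].
Qed.

(* Elementwise form of "(U ∩ 𝔞M)/𝔞U is S-torsion". *)
Definition quot_ass_torsion (R A : pzRingType) (S : R -> Prop) (phi : R -> A)
  (M : lmodType R) (U : M -> Prop) : Prop :=
  forall y, U y -> ideal_mul (ass phi) (fun _ => True) y ->
  exists2 s, S s & ideal_mul (ass phi) U (s *: y).

Lemma quot_ass_torsion_tensor_trivial (R A B : pzRingType) (S : R -> Prop) (phi : R -> A)
  (phiB : R -> B) (M : lmodType R) (U : M -> Prop) (T : lmodType B) (io : M -> T) :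
  inverts S phiB -> quot_ass_torsion S phi U ->
  is_tensor_quot phiB (fun x => U x /\ ideal_mul (ass phi) (fun _ => True) x)
    (ideal_mul (ass phi) U) io ->
  forall t : T, t = 0.
Proof.
move=> phiB_inv U_tors io_t; apply: (is_tensor_quot_trivial io_t) => p [Up p_a].
have [t St tp_a] := U_tors p Up p_a.
have [[_ ioZ] io_Q _] := io_t.
by apply: (inverts_scalerI phiB_inv St); rewrite -ioZ ?io_Q ?scaler0.
Qed.

Section LeftFractionsExactness.
Variables (R A : pzRingType) (S : R -> Prop) (phi : {rmorphism R -> A}).
Hypotheses (S1 : S 1) (SM : forall s t, S s -> S t -> S (s * t)).
Hypotheses (phi_inv : inverts S phi) (phi_frac : left_fractions S phi).

Lemma loc_exact_quot_ass_torsion (M : lmodType R) (U : M -> Prop) (Usub : submod U) :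
  loc_functor_exact phi -> quot_ass_torsion S phi U.
Proof.
move=> loc_exact p Up p_a.
pose iota1 := frac_iota S1 SM phi_inv phi_frac (submod_eq0 (submodule Usub)).
pose iota2 := frac_iota S1 SM phi_inv phi_frac (submod_eq0 M).
have iota1_t := frac_iota_tensor S1 SM phi_inv phi_frac (submod_eq0 (submodule Usub)).
have iota2_t := frac_iota_tensor S1 SM phi_inv phi_frac (submod_eq0 M).
have [iota2_sl iota2_Q _] := iota2_t; have [iota2D iota2Z] := iota2_sl.
have f_sl : semilin_on phi (fun _ => True) (iota2 \o @subval _ _ _ Usub).
  by split=> [x y _ _|r x _]; rewrite /= -?iota2D -?iota2Z.
have f_0 (y : submodule Usub) : y = 0 -> iota2 (subval y) = 0.
  by move=> ->; apply: iota2_Q.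
have [_ _ iota1_univ] := iota1_t.
have [F [Fk F_iota _]] := iota1_univ _ _ f_sl f_0.
(* [p] dies in [S^{-1}M], hence by injectivity already in [S^{-1}U]. *)
have iota1p : iota1 (insubd 0 p) = 0.
  apply: (loc_exact_injective loc_exact (subval_lin Usub) _ iota1_t iota2_t Fk).
  - by move=> y y0; apply: val_inj.
  - by move=> m; apply: F_iota.
  - rewrite F_iota //= insubd_val //.
    exact: semilin_on_ass (submodT M) iota2_sl _ p_a.
have [t St [q q0 tp_a]] := frac_iota_eq0 iota1p.
apply: (ex_intro2 _ _ t St); rewrite -(insubd_val Usub Up).
by move: tp_a; rewrite q0 subr0; apply: ideal_mul_subval.
Qed.

Section ExactSequence.
Variables (M1 M2 M3 : lmodType R) (f : M1 -> M2) (g : M2 -> M3).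
Hypothesis g_lin : semilin_on id (fun _ => True) g.
Hypothesis fg_exact : forall y, g y = 0 <-> exists x, f x = y.
Variables (T1 T2 T3 : lmodType A) (i1 : M1 -> T1) (i2 : M2 -> T2) (i3 : M3 -> T3).
Hypotheses (i1_t : is_tensor phi i1) (i2_t : is_tensor phi i2) (i3_t : is_tensor phi i3).
Variables (F : T1 -> T2) (G : T2 -> T3).
Hypotheses (Fk : klin F) (Gk : klin G).
Hypotheses (F_i : forall m, F (i1 m) = i2 (f m)) (G_i : forall m, G (i2 m) = i3 (g m)).

Lemma loc_image_sub_kernel u : G (F u) = 0.
Proof.
have [s [m [Ss sum]]] := is_tensor_quot_denom S1 SM phi_inv phi_frac (submod_eq0 M1) i1_t u.
apply: (inverts_scalerI phi_inv Ss); case: Fk => _ FZ; case: Gk => _ GZ.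
rewrite -GZ -FZ sum F_i G_i scaler0.
have -> : g (f m) = 0 by apply/fg_exact; exists m.
by case: i3_t => _ i3_Q _; apply: i3_Q.
Qed.

Hypothesis image_tors : quot_ass_torsion S phi (fun z => exists x, g x = z).

Lemma loc_kernel_sub_image t : G t = 0 -> exists u, F u = t.
Proof.
move=> Gt0; have [gD gZ] := g_lin.
have [s [m [Ss stm]]] := is_tensor_quot_denom S1 SM phi_inv phi_frac (submod_eq0 M2) i2_t t.
have i3gm : i3 (g m) = 0 by case: Gk => _ GZ; rewrite -G_i -stm GZ Gt0 scaler0.
have [s1 Ss1 [_ ->]] := is_tensor_quot_eq0 S1 SM phi_inv phi_frac (submod_eq0 M3) i3_t i3gm.
rewrite subr0 => s1gm_a.
have [s2 Ss2] := image_tors (ex_intro _ (s1 *: m) (gZ _ _ I)) s1gm_a.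
move=> /(ideal_mul_lift g_lin) [x x_a gx].
have [m1 fm1] : exists m1, f m1 = (s2 * s1) *: m - x.
  by apply/fg_exact; rewrite (semilin_onB (submodT M2) g_lin) // gZ // gx scalerA subrr.
have [y [_ yV]] := phi_inv (SM (SM Ss2 Ss1) Ss).
have [i2_sl _ _] := i2_t; have [_ i2Z] := i2_sl.
exists (y *: i1 m1); case: Fk => _ FZ.
rewrite FZ F_i fm1 (semilin_onB (submodT M2) i2_sl) //.
rewrite (semilin_on_ass (submodT M2) i2_sl x_a) subr0 i2Z // -stm.
by rewrite !scalerA -mulrA -rmorphM yV scale1r.
Qed.

End ExactSequence.

Lemma quot_ass_torsion_loc_exact :
  (forall (M : lmodType R) (U : M -> Prop), submod U -> quot_ass_torsion S phi U) ->
  loc_functor_exact phi.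
Proof.
move=> tors M1 M2 M3 f g _ g_lin fg_exact T1 T2 T3 i1 i2 i3 i1_t i2_t i3_t F G Fk Gk F_i G_i t.
have image_tors := tors _ _ (submod_image g_lin).
split=> [Gt0|[u <-]].
- exact: (loc_kernel_sub_image g_lin fg_exact i2_t i3_t Fk Gk F_i G_i image_tors Gt0).
- exact: (loc_image_sub_kernel fg_exact i1_t i3_t Fk Gk F_i G_i u).
Qed.

End LeftFractionsExactness.

Section TorsionQuotient.
Variables (R A B : pzRingType) (S : R -> Prop).
Variables (phi : {rmorphism R -> A}) (phiB : {rmorphism R -> B}).
Hypotheses (S1 : S 1) (SM : forall s t, S s -> S t -> S (s * t)).
Hypotheses (phiB_inv : inverts S phiB) (phiB_frac : left_fractions S phiB).
Hypothesis phiB_ass : forall r, phiB r = 0 -> phi r = 0.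

Lemma torsion_quot_ass_torsion (M : lmodType R) (U : M -> Prop) (Usub : submod U) :
  (forall (T : lmodType B) (io : M -> T),
    is_tensor_quot phiB (fun x => U x /\ ideal_mul (ass phi) (fun _ => True) x)
      (ideal_mul (ass phi) U) io ->
    forall t : T, t = 0) ->
  quot_ass_torsion S phi U.
Proof.
move=> tors y Uy y_a.
have aUsub := submod_ideal_mul U (@ass_lideal _ _ phi).
have Psub := submodI Usub (submod_ideal_mul (fun _ => True) (@ass_lideal _ _ phi)).
have QP x : ideal_mul (ass phi) U x -> U x /\ ideal_mul (ass phi) (fun _ => True) x.
  by move=> x_a; split; [apply: ideal_mul_sub x_a | apply: ideal_mulS x_a].
have Qsub := submod_subval_preim Psub aUsub.
have N_t := frac_iota_tensor S1 SM phiB_inv phiB_frac Qsub.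
have iota0 := tors _ _ (is_tensor_quot_submodule QP N_t).
have [s Ss [q Qq sy_a]] := frac_iota_eq0 (iota0 (frac_iota _ _ _ _ _ (insubd 0 y))).
apply: (ex_intro2 _ _ s Ss); rewrite -(subrK (subval q) (s *: y)).
apply: (submodD aUsub) => //; rewrite -(insubd_val Psub (conj Uy y_a)).
move: sy_a => /(ideal_mul_subval (Usub := Psub)).
by apply: ideal_mulS => [r /phiB_ass|x []].
Qed.

End TorsionQuotient.

Theorem theorem6p3 (R : pzRingType) (S : R -> Prop) (k : loc_kind)
  (A : pzRingType) (phi : {rmorphism R -> A})
  (Rb : pzRingType) (pi : {rmorphism R -> Rb})
  (B : pzRingType) (psi : {rmorphism Rb -> B}) :
  mult_set S ->
  univ_loc S phi ->                        (* A = S^{-1}R = R<S^{-1}> *)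
  localizable k S phi ->                   (* S in L_k(R, a), a = ass phi *)
  (forall y : Rb, exists r, pi r = y) ->
  (forall r, pi r = 0 <-> ass phi r) ->    (* Rb = R / a *)
  univ_loc (img_set pi S) psi ->           (* B = Sbar^{-1} Rb *)
  (loc_functor_exact phi <->
   forall (M2 : lmodType R) (M1 : M2 -> Prop), submod M1 ->
     torsion_quot pi psi
       (fun x => M1 x /\ ideal_mul (ass phi) (fun _ => True) x)
       (ideal_mul (ass phi) M1)).
Proof.
move=> [S1 _ SM] phi_univ phi_loc pi_surj pi_ker psi_univ.
have phi_frac := localizable_left_fractions phi_loc.
have phiB_inv := loc_quotient_inverts psi_univ.
split=> [loc_exact M2 M1 M1sub T io | tors].
  exact: (quot_ass_torsion_tensor_trivial phiB_inv
    (loc_exact_quot_ass_torsion S1 SM phi_univ.1 phi_frac M1sub loc_exact)).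
have U_tors (M : lmodType R) (U : M -> Prop) (Usub : submod U) : quot_ass_torsion S phi U.
  pose phiB : {rmorphism R -> B} := (psi \o pi)%FUN.
  apply: (torsion_quot_ass_torsion (phiB := phiB) S1 SM phiB_inv _ _ Usub (tors M U Usub)).
  - exact: loc_quotient_fractions phi_univ phi_frac pi_surj pi_ker psi_univ.
  - exact: loc_quotient_ass phi_univ pi_surj pi_ker psi_univ.
exact: (quot_ass_torsion_loc_exact S1 SM phi_univ.1 phi_frac U_tors).
Qed.
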